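(* CAP has exactly one solution, and for any auxiliary function $g:I\to\mathbb{R}$ and any $h\in I$ solving WFP (i.e. $\beta(h)=b$), this unique solution is $(\theta_1(h),\dots,\theta_k(h))$; moreover such an $h$ exists.
   Context: Let $s:[0,B]\to[0,\infty)$ satisfy $s(0)=0$, be strictly increasing, strictly concave, differentiable, with $s'$ continuous on $[0,B]$ (so $s'>0$ is strictly decreasing). Fix $b\in(0,B]$, an integer $k\ge2$, and constants $c_1\ge c_2\ge\cdots\ge c_k>0$. The Constrained Allocation Problem (CAP) is: find $\theta_1,\dots,\theta_k\ge0$ such that (i) $\theta_1+\cdots+\theta_k=b$; (ii) $\theta_1\le\theta_2\le\cdots\le\theta_k$; (iii) $s'(\theta_j)/s'(\theta_i)=c_j/c_i$ whenever $i<j$ and $\theta_j\ge\theta_i>0$; (iv) $s'(\theta_j)/s'(0)\ge c_j/c_i$ whenever $i<j$ and $\theta_j>\theta_i=0$. Let $s'^{(-1)}:[s'(b),s'(0)]\to[0,b]$ denote the inverse of $s'$ restricted to $[0,b]$. An auxiliary function is a continuous, strictly decreasing function $g:I\to\mathbb{R}$ on an interval $I\subseteq\mathbb{R}$ for which there exist $h_{lo}<h_{hi}$ in $I$ with $g(h_{hi})\le s'(b)/c_1$ and $g(h_{lo})\ge s'(0)/c_k$. For $i=1,\dots,k$ and $h\in I$ define $\theta_i(h)=0$ if $c_ig(h)\ge s'(0)$; $\theta_i(h)=s'^{(-1)}(c_ig(h))$ if $s'(b)<c_ig(h)<s'(0)$; and $\theta_i(h)=b$ if $c_ig(h)\le s'(b)$.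 Let $\beta(h)=\sum_{i=1}^k\theta_i(h)$. The Water-Filling Problem (WFP) is: find $h\in I$ with $\beta(h)=b$. *)

From Stdlib Require Import Reals Lra Epsilon.
Open Scope R_scope.

Fixpoint sum_to (n : nat) (f : nat -> R) : R :=
  match n with
  | O => 0
  | S m => sum_to m f + f n
  end.

Definition deriv_on (s ds : R -> R) (B : R) : Prop :=
  forall x, 0 <= x <= B ->
    limit1_in (fun y => (s y - s x) / (y - x))
              (fun y => 0 <= y <= B /\ y <> x) (ds x) x.

Definition cont_on (f : R -> R) (D : R -> Prop) : Prop :=
  forall x, D x -> limit1_in f D (f x) x.

Definition strictly_increasing_on (f : R -> R) (D : R -> Prop) : Prop :=
  forall x y, D x -> D y -> x < y -> f x < f y.

Definition strictly_decreasing_on (f : R -> R) (D : R -> Prop) : Prop :=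
  forall x y, D x -> D y -> x < y -> f y < f x.

Definition strictly_concave_on (f : R -> R) (a c : R) : Prop :=
  forall x y t, a <= x <= c -> a <= y <= c -> x <> y -> 0 < t < 1 ->
    t * f x + (1 - t) * f y < f (t * x + (1 - t) * y).

Definition is_interval (I : R -> Prop) : Prop :=
  forall x y z, I x -> I z -> x <= y <= z -> I y.

Definition standing (s ds : R -> R) (B b : R) (k : nat) (c : nat -> R) : Prop :=
  (forall x, 0 <= x <= B -> 0 <= s x) /\
  s 0 = 0 /\
  strictly_increasing_on s (fun x => 0 <= x <= B) /\
  strictly_concave_on s 0 B /\
  deriv_on s ds B /\
  cont_on ds (fun x => 0 <= x <= B) /\
  0 < b <= B /\
  (2 <= k)%nat /\
  (forall i, (1 <= i)%nat -> (i < k)%nat -> c (S i) <= c i) /\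
  0 < c k.

Definition CAP (ds : R -> R) (b : R) (k : nat) (c : nat -> R)
    (theta : nat -> R) : Prop :=
  (forall i, (1 <= i <= k)%nat -> 0 <= theta i) /\
  sum_to k theta = b /\
  (forall i, (1 <= i)%nat -> (i < k)%nat -> theta i <= theta (S i)) /\
  (forall i j, (1 <= i)%nat -> (i < j)%nat -> (j <= k)%nat ->
      theta j >= theta i -> theta i > 0 ->
      ds (theta j) / ds (theta i) = c j / c i) /\
  (forall i j, (1 <= i)%nat -> (i < j)%nat -> (j <= k)%nat ->
      theta j > theta i -> theta i = 0 ->
      ds (theta j) / ds 0 >= c j / c i).

(* s'^(-1) : [s'(b), s'(0)] -> [0,b], the inverse of s' restricted to [0,b]
   (chosen by Hilbert epsilon; well-defined since s' is continuous and
   strictly decreasing). *)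
Definition ds_inv (ds : R -> R) (b : R) (y : R) : R :=
  epsilon (inhabits 0) (fun x => 0 <= x <= b /\ ds x = y).

Definition auxiliary (ds : R -> R) (b : R) (k : nat) (c : nat -> R)
    (I : R -> Prop) (g : R -> R) : Prop :=
  is_interval I /\ cont_on g I /\ strictly_decreasing_on g I /\
  exists hlo hhi, I hlo /\ I hhi /\ hlo < hhi /\
    g hhi <= ds b / c 1%nat /\ g hlo >= ds 0 / c k.

Definition theta_h (ds : R -> R) (b : R) (c : nat -> R) (g : R -> R)
    (h : R) (i : nat) : R :=
  if Rle_dec (ds 0) (c i * g h) then 0
  else if Rlt_dec (ds b) (c i * g h) then ds_inv ds b (c i * g h)
  else b.

Definition beta (ds : R -> R) (b : R) (k : nat) (c : nat -> R)
    (g : R -> R) (h : R) : R :=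
  sum_to k (theta_h ds b c g h).

(* Strict concavity makes s' strictly decreasing, so [clamped_inv], the inverse
   of s' on [0, b] extended by 0 above s'(0) and by b below s'(b), is antitone
   and, its image being an interval, continuous.  The allocations
   theta_i = clamped_inv (c_i lam) at a level lam satisfy every condition of CAP
   as soon as they sum to b; conversely the ratio conditions force every CAP
   solution into this form with lam = s'(theta_k) / c_k.  The total allocation
   is antitone in lam, so two levels with total b give pointwise comparable
   allocations with equal sums, hence equal allocations.  A level with total b
   exists by the intermediate value theorem, since beta is continuous, vanishes
   at h_lo and is at least 2b at h_hi. *)

From Stdlib Require Import Reals Lra Lia Epsilon.
Open Scope R_scope.

Lemma limit1_in_subdomain f D D' l x0 :
  (forall x, D' x -> D x) -> limit1_in f D l x0 -> limit1_in f D' l x0.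
Proof.
  intros HD Hf eps Heps. destruct (Hf eps Heps) as (alp & Halp & Hnear).
  exists alp. split; [exact Halp|]. intros x [Dx Hx]. apply Hnear. split; auto.
Qed.

Lemma limit1_in_ge f D l x0 L : limit1_in f D l x0 ->
  (forall alp, alp > 0 -> exists y, D y /\ Rabs (y - x0) < alp /\ L <= f y) ->
  L <= l.
Proof.
  intros Hf Hfreq. destruct (Rle_dec L l) as [|Hlt]; [assumption|].
  destruct (Hf (L - l)) as (alp & Halp & Hnear); [lra|].
  destruct (Hfreq alp Halp) as (y & Dy & Hy & HL).
  pose proof (Hnear y (conj Dy Hy)) as Hfy. apply Rabs_def2 in Hfy. lra.
Qed.

Lemma limit1_in_le f D l x0 L : limit1_in f D l x0 ->
  (forall alp, alp > 0 -> exists y, D y /\ Rabs (y - x0) < alp /\ f y <= L) ->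
  l <= L.
Proof.
  intros Hf Hfreq. enough (- L <= - l) by lra.
  apply (limit1_in_ge (fun x => - f x) D _ x0); [exact (limit_Ropp _ _ _ _ Hf)|].
  intros alp Halp. destruct (Hfreq alp Halp) as (y & Dy & Hy & HL).
  exists y. repeat split; auto. lra.
Qed.

Lemma exists_near_right x y alp : x < y -> alp > 0 ->
  exists z, x < z < y /\ Rabs (z - x) < alp.
Proof.
  intros Hxy Halp. exists (x + Rmin alp (y - x) / 2).
  pose proof (Rmin_l alp (y - x)). pose proof (Rmin_r alp (y - x)).
  assert (0 < Rmin alp (y - x)) by (apply Rmin_glb_lt; lra).
  split; [lra|]. rewrite Rabs_right; lra.
Qed.

Lemma exists_near_left x y alp : x < y -> alp > 0 ->
  exists z, x < z < y /\ Rabs (z - y) < alp.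
Proof.
  intros Hxy Halp. destruct (exists_near_right (- y) (- x) alp) as (z & Hz & Hzy); [lra|lra|].
  exists (- z). split; [lra|]. now replace (- z - y) with (- (z - - y)) by ring; rewrite Rabs_Ropp.
Qed.

Lemma Rdiv_le_Rdiv_iff a b c d : 0 < b -> 0 < d -> a / b <= c / d <-> a * d <= c * b.
Proof.
  intros Hb Hd.
  replace (a * d) with (a / b * (b * d)) by (field; lra).
  replace (c * b) with (c / d * (b * d)) by (field; lra).
  split; intros H; [apply Rmult_le_compat_r; [nra|exact H]|].
  exact (Rmult_le_reg_r (b * d) _ _ ltac:(nra) H).
Qed.

Lemma Rdiv_lt_Rdiv a b c d : 0 < b -> 0 < d -> a * d < c * b -> a / b < c / d.
Proof.
  intros Hb Hd H. apply (Rmult_lt_reg_r (b * d)); [nra|].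
  replace (a / b * (b * d)) with (a * d) by (field; lra).
  replace (c / d * (b * d)) with (c * b) by (field; lra). exact H.
Qed.

Section ConcaveSlopes.

Variables (s : R -> R) (lo hi : R).
Hypothesis s_concave : strictly_concave_on s lo hi.

Lemma concave_chord_lt x m y : lo <= x -> x < m -> m < y -> y <= hi ->
  (y - m) * s x + (m - x) * s y < (y - x) * s m.
Proof.
  intros Hx Hxm Hmy Hy. set (t := (y - m) / (y - x)).
  assert (Ht : 0 < t < 1).
  { unfold t. split; [apply Rdiv_lt_0_compat; lra|].
    apply (Rmult_lt_reg_r (y - x)); [lra|]. field_simplify; lra. }
  pose proof (s_concave x y t ltac:(lra) ltac:(lra) ltac:(lra) Ht) as Hconc.
  replace (t * x + (1 - t) * y) with m in Hconc by (unfold t; field; lra).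
  replace ((y - m) * s x + (m - x) * s y) with ((y - x) * (t * s x + (1 - t) * s y))
    by (unfold t; field; lra).
  apply Rmult_lt_compat_l; lra.
Qed.

Lemma concave_slope_lt_l x m y : lo <= x -> x < m -> m < y -> y <= hi ->
  (s y - s x) / (y - x) < (s m - s x) / (m - x).
Proof.
  intros. pose proof (concave_chord_lt x m y). apply Rdiv_lt_Rdiv; nra.
Qed.

Lemma concave_slope_lt_r x m y : lo <= x -> x < m -> m < y -> y <= hi ->
  (s y - s m) / (y - m) < (s y - s x) / (y - x).
Proof.
  intros. pose proof (concave_chord_lt x m y). apply Rdiv_lt_Rdiv; nra.
Qed.

End ConcaveSlopes.

Section OneSidedDerivative.

Variables (s ds : R -> R) (B : R).
Hypothesis s_deriv : deriv_on s ds B.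

Lemma deriv_ge_of_right_slopes x y L : 0 <= x -> x < y -> y <= B ->
  (forall z, x < z < y -> L <= (s z - s x) / (z - x)) -> L <= ds x.
Proof.
  intros Hx Hxy Hy Hsl. apply (limit1_in_ge _ _ _ _ _ (s_deriv x ltac:(lra))).
  intros alp Halp. destruct (exists_near_right x y alp) as (z & Hz & Hzx); auto.
  exists z. split; [split; lra|]. split; [exact Hzx|]. apply Hsl; lra.
Qed.

Lemma deriv_le_of_left_slopes x y L : 0 <= x -> x < y -> y <= B ->
  (forall z, x < z < y -> (s y - s z) / (y - z) <= L) -> ds y <= L.
Proof.
  intros Hx Hxy Hy Hsl. apply (limit1_in_le _ _ _ _ _ (s_deriv y ltac:(lra))).
  intros alp Halp. destruct (exists_near_left x y alp) as (z & Hz & Hzy); auto.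
  exists z. split; [split; lra|]. split; [exact Hzy|].
  replace ((s z - s y) / (z - y)) with ((s y - s z) / (y - z)) by (field; lra).
  apply Hsl; lra.
Qed.

Lemma deriv_ge_of_left_slopes x y L : 0 <= x -> x < y -> y <= B ->
  (forall z, x < z < y -> L <= (s y - s z) / (y - z)) -> L <= ds y.
Proof.
  intros Hx Hxy Hy Hsl. apply (limit1_in_ge _ _ _ _ _ (s_deriv y ltac:(lra))).
  intros alp Halp. destruct (exists_near_left x y alp) as (z & Hz & Hzy); auto.
  exists z. split; [split; lra|]. split; [exact Hzy|].
  replace ((s z - s y) / (z - y)) with ((s y - s z) / (y - z)) by (field; lra).
  apply Hsl; lra.
Qed.

(* The derivative at each end is compared with the chord over the adjacent
   half of [x, y]; strict concavity separates the two half-chords. *)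
Lemma deriv_strictly_decreasing : strictly_concave_on s 0 B ->
  strictly_decreasing_on ds (fun x => 0 <= x <= B).
Proof.
  intros s_concave x y Hx Hy Hxy. set (m := (x + y) / 2).
  assert (Hdx : (s m - s x) / (m - x) <= ds x).
  { apply (deriv_ge_of_right_slopes x m); unfold m; try lra.
    intros z Hz. left. apply (concave_slope_lt_l s 0 B s_concave); lra. }
  assert (Hdy : ds y <= (s y - s m) / (y - m)).
  { apply (deriv_le_of_left_slopes m y); unfold m; try lra.
    intros z Hz. left. apply (concave_slope_lt_r s 0 B s_concave); lra. }
  pose proof (concave_slope_lt_l s 0 B s_concave x m y).
  pose proof (concave_slope_lt_r s 0 B s_concave x m y).
  unfold m in *. lra.
Qed.

Lemma deriv_nonneg : strictly_increasing_on s (fun x => 0 <= x <= B) ->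
  forall y, 0 < y <= B -> 0 <= ds y.
Proof.
  intros s_incr y Hy. apply (deriv_ge_of_left_slopes 0 y); try lra.
  intros z Hz. left. apply Rdiv_lt_0_compat; [|lra].
  enough (s z < s y) by lra. apply s_incr; lra.
Qed.

End OneSidedDerivative.

Definition clamp (lo hi u : R) : R := Rmax lo (Rmin hi u).

Lemma clamp_range lo hi u : lo <= hi -> lo <= clamp lo hi u <= hi.
Proof. intros. unfold clamp, Rmax, Rmin. repeat destruct Rle_dec; lra. Qed.

Lemma clamp_id lo hi u : lo <= u <= hi -> clamp lo hi u = u.
Proof. intros. unfold clamp, Rmax, Rmin. repeat destruct Rle_dec; lra. Qed.

Lemma clamp_lipschitz lo hi u v : Rabs (clamp lo hi u - clamp lo hi v) <= Rabs (u - v).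
Proof.
  unfold clamp, Rmax, Rmin, Rabs. repeat destruct Rle_dec; repeat destruct Rcase_abs; lra.
Qed.

(* Extending f by constants outside [lo, hi] makes it continuous on R. *)
Lemma IVT_within f lo hi y : lo <= hi -> cont_on f (fun x => lo <= x <= hi) ->
  (f lo - y) * (f hi - y) <= 0 -> exists z, lo <= z <= hi /\ f z = y.
Proof.
  intros Hlohi Hf Hsign.
  assert (Hcont : continuity (fun u => f (clamp lo hi u) - y)).
  { intros u. apply (limit_minus _ (fun _ => y)); [|apply (limit_free (fun _ => y) _ u)].
    apply (limit1_in_subdomain _ (Dgf (D_x no_cond u) (fun x => lo <= x <= hi) (clamp lo hi))).
    { intros x Hx. split; [exact Hx|apply clamp_range; exact Hlohi]. }
    apply limit_comp with (l := clamp lo hi u).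
    2: { apply Hf. apply clamp_range. exact Hlohi. }
    intros eps Heps. exists eps. split; [exact Heps|]. intros x [_ Hx].
    exact (Rle_lt_trans _ _ _ (clamp_lipschitz lo hi x u) Hx). }
  destruct (IVT_cor _ lo hi Hcont Hlohi) as (z & Hz & Hfz).
  { rewrite !clamp_id by lra. exact Hsign. }
  exists z. split; [exact Hz|]. rewrite clamp_id in Hfz by lra. lra.
Qed.

Lemma antitone_onto_near_ge (f : R -> R) lo hi x0 e :
  (forall x y, x <= y -> f y <= f x) -> (forall x, lo <= f x) ->
  (forall z, lo <= z <= hi -> exists x, f x = z) -> f x0 <= hi -> 0 < e ->
  exists d, d > 0 /\ forall y, Rabs (y - x0) < d -> f x0 - e <= f y.
Proof.
  intros f_anti f_lo f_onto Hx0 He.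
  destruct (Rle_dec (f x0 - e) lo) as [Hlow|Hlow].
  - exists 1. split; [lra|]. intros y _. pose proof (f_lo y). lra.
  - destruct (f_onto (f x0 - e)) as (x1 & Hx1); [lra|].
    assert (Hx01 : x0 < x1).
    { destruct (Rlt_dec x0 x1) as [|Hge]; [assumption|].
      pose proof (f_anti x1 x0 ltac:(lra)). lra. }
    exists (x1 - x0). split; [lra|]. intros y Hy. apply Rabs_def2 in Hy.
    rewrite <- Hx1. apply f_anti. lra.
Qed.

(* A monotone function whose image is an interval has no jumps; the upper
   bound follows from the lower one applied to x |-> - f (- x). *)
Lemma antitone_onto_continuous (f : R -> R) lo hi :
  (forall x y, x <= y -> f y <= f x) -> (forall x, lo <= f x <= hi) ->
  (forall z, lo <= z <= hi -> exists x, f x = z) ->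
  forall x0, limit1_in f (fun _ => True) (f x0) x0.
Proof.
  intros f_anti f_range f_onto x0 eps Heps.
  destruct (antitone_onto_near_ge f lo hi x0 (eps / 2)) as (d1 & Hd1 & Hge);
    [exact f_anti|apply f_range|exact f_onto|apply f_range|lra|].
  destruct (antitone_onto_near_ge (fun x => - f (- x)) (- hi) (- lo) (- x0) (eps / 2))
    as (d2 & Hd2 & Hle).
  - intros x y Hxy. pose proof (f_anti (- y) (- x) ltac:(lra)). lra.
  - intros x. pose proof (f_range (- x)). lra.
  - intros z Hz. destruct (f_onto (- z)) as (x & Hx); [lra|].
    exists (- x). rewrite Ropp_involutive, Hx. ring.
  - pose proof (f_range x0). rewrite Ropp_involutive. lra.
  - lra.
  - exists (Rmin d1 d2). split; [apply Rmin_glb_lt; lra|].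
    intros y [_ Hy]. simpl in *. unfold Rdist in *.
    pose proof (Rmin_l d1 d2). pose proof (Rmin_r d1 d2).
    pose proof (Hge y ltac:(lra)).
    pose proof (Hle (- y) ltac:(replace (- y - - x0) with (- (y - x0)) by ring;
                                 rewrite Rabs_Ropp; lra)) as Hy'.
    rewrite !Ropp_involutive in Hy'. apply Rabs_def1; lra.
Qed.

Lemma sum_to_ext n f g : (forall i, (1 <= i <= n)%nat -> f i = g i) ->
  sum_to n f = sum_to n g.
Proof.
  induction n as [|n IH]; intros Hfg; simpl; [reflexivity|].
  rewrite IH by (intros; apply Hfg; lia). rewrite Hfg by lia. reflexivity.
Qed.

Lemma sum_to_eq0 n f : (forall i, (1 <= i <= n)%nat -> f i = 0) -> sum_to n f = 0.
Proof.
  induction n as [|n IH]; intros Hf; simpl; [reflexivity|].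
  rewrite IH by (intros; apply Hf; lia). rewrite (Hf (S n)) by lia. ring.
Qed.

Lemma sum_to_minus n f g : sum_to n (fun i => f i - g i) = sum_to n f - sum_to n g.
Proof. induction n as [|n IH]; simpl; [ring|]. rewrite IH. ring. Qed.

Lemma sum_to_nonneg n f : (forall i, (1 <= i <= n)%nat -> 0 <= f i) -> 0 <= sum_to n f.
Proof.
  induction n as [|n IH]; intros Hf; simpl; [lra|].
  pose proof (IH ltac:(intros; apply Hf; lia)). pose proof (Hf (S n) ltac:(lia)). lra.
Qed.

Lemma sum_to_term_le n f i : (forall j, (1 <= j <= n)%nat -> 0 <= f j) ->
  (1 <= i <= n)%nat -> f i <= sum_to n f.
Proof.
  induction n as [|n IH]; intros Hf Hi; simpl; [lia|].
  pose proof (Hf (S n) ltac:(lia)).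
  destruct (Nat.eq_dec i (S n)) as [->|Hne].
  - pose proof (sum_to_nonneg n f ltac:(intros; apply Hf; lia)). lra.
  - pose proof (IH ltac:(intros; apply Hf; lia) ltac:(lia)). lra.
Qed.

Lemma sum_to_two_terms_le n f i j : (forall l, (1 <= l <= n)%nat -> 0 <= f l) ->
  (1 <= i)%nat -> (i < j <= n)%nat -> f i + f j <= sum_to n f.
Proof.
  induction n as [|n IH]; intros Hf Hi Hij; simpl; [lia|].
  pose proof (Hf (S n) ltac:(lia)).
  destruct (Nat.eq_dec j (S n)) as [->|Hne].
  - pose proof (sum_to_term_le n f i ltac:(intros; apply Hf; lia) ltac:(lia)). lra.
  - pose proof (IH ltac:(intros; apply Hf; lia) Hi ltac:(lia)). lra.
Qed.

Lemma sum_to_le_eq n f g : (forall i, (1 <= i <= n)%nat -> f i <= g i) ->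
  sum_to n f = sum_to n g -> forall i, (1 <= i <= n)%nat -> f i = g i.
Proof.
  intros Hfg Hsum i Hi.
  pose proof (sum_to_term_le n (fun j => g j - f j) i
    ltac:(intros j Hj; pose proof (Hfg j Hj); lra) Hi) as Hle.
  rewrite sum_to_minus, Hsum in Hle. pose proof (Hfg i Hi). lra.
Qed.

Lemma limit1_in_sum_to n (F : R -> nat -> R) D x0 :
  (forall i, (1 <= i <= n)%nat -> limit1_in (fun x => F x i) D (F x0 i) x0) ->
  limit1_in (fun x => sum_to n (F x)) D (sum_to n (F x0)) x0.
Proof.
  induction n as [|n IH]; intros HF; simpl.
  - exact (limit_free (fun _ => 0) D x0 x0).
  - apply limit_plus; [apply IH; intros; apply HF; lia|apply HF; lia].
Qed.

Lemma stepwise_le (f : nat -> R) n :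
  (forall i, (1 <= i)%nat -> (i < n)%nat -> f i <= f (S i)) ->
  forall i j, (1 <= i)%nat -> (i <= j <= n)%nat -> f i <= f j.
Proof.
  intros Hstep i j Hi Hij. induction j as [|j IH]; [lia|].
  destruct (Nat.eq_dec i (S j)) as [->|Hne]; [lra|].
  pose proof (IH ltac:(lia)). pose proof (Hstep j ltac:(lia) ltac:(lia)). lra.
Qed.

Lemma auxiliary_opp ds b k c : auxiliary ds b k c (fun _ => True) Ropp.
Proof.
  split; [intros ? ? ? _ _ _; trivial|]. split; [intros x _; apply limit_Ropp, lim_x|].
  split; [intros x y _ _ Hxy; lra|].
  set (hhi := - (ds b / c 1%nat)).
  exists (Rmin (- (ds 0 / c k)) hhi - 1), hhi.
  pose proof (Rmin_l (- (ds 0 / c k)) hhi). pose proof (Rmin_r (- (ds 0 / c k)) hhi).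
  unfold hhi in *. repeat split; lra.
Qed.

Definition clamped_inv (ds : R -> R) (b y : R) : R :=
  if Rle_dec (ds 0) y then 0
  else if Rlt_dec (ds b) y then ds_inv ds b y
  else b.

Section WaterFilling.

Variables (ds : R -> R) (b : R).
Hypothesis b_pos : 0 < b.
Hypothesis ds_decr : strictly_decreasing_on ds (fun x => 0 <= x <= b).
Hypothesis ds_cont : cont_on ds (fun x => 0 <= x <= b).

Lemma ds_b_lt_ds_0 : ds b < ds 0.
Proof. apply ds_decr; lra. Qed.

Lemma le_of_ds_le x y : 0 <= x <= b -> 0 <= y <= b -> ds x <= ds y -> y <= x.
Proof.
  intros Hx Hy Hds. destruct (Rle_dec y x) as [|Hlt]; [assumption|].
  pose proof (ds_decr x y Hx Hy ltac:(lra)). lra.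
Qed.

Lemma ds_inv_spec y : ds b <= y <= ds 0 ->
  0 <= ds_inv ds b y <= b /\ ds (ds_inv ds b y) = y.
Proof.
  intros Hy. unfold ds_inv. apply epsilon_spec.
  apply IVT_within; [lra|exact ds_cont|nra].
Qed.

Lemma clamped_inv_cases y :
  (ds 0 <= y /\ clamped_inv ds b y = 0) \/
  (ds b < y < ds 0 /\ 0 <= clamped_inv ds b y <= b /\ ds (clamped_inv ds b y) = y) \/
  (y <= ds b /\ clamped_inv ds b y = b).
Proof.
  unfold clamped_inv.
  destruct (Rle_dec (ds 0) y); [left; auto|].
  destruct (Rlt_dec (ds b) y); [right; left|right; right; split; auto; lra].
  split; [lra|]. apply ds_inv_spec. lra.
Qed.

Lemma clamped_inv_range y : 0 <= clamped_inv ds b y <= b.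
Proof. destruct (clamped_inv_cases y) as [[_ ->]|[(_ & [? ?] & _)|[_ ->]]]; lra. Qed.

Lemma clamped_inv_low y : ds 0 <= y -> clamped_inv ds b y = 0.
Proof.
  intros Hy. pose proof ds_b_lt_ds_0.
  destruct (clamped_inv_cases y) as [[_ ->]|[(? & _)|[? _]]]; [reflexivity|lra..].
Qed.

Lemma clamped_inv_high y : y <= ds b -> clamped_inv ds b y = b.
Proof.
  intros Hy. pose proof ds_b_lt_ds_0.
  destruct (clamped_inv_cases y) as [[? _]|[(? & _)|[_ ->]]]; [lra|lra|reflexivity].
Qed.

Lemma clamped_inv_ds x : 0 <= x <= b -> clamped_inv ds b (ds x) = x.
Proof.
  intros Hx. destruct (clamped_inv_cases (ds x)) as [[Hy ->]|[(Hy & Hr & Heq)|[Hy ->]]].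
  - pose proof (le_of_ds_le 0 x ltac:(lra) Hx ltac:(lra)). lra.
  - apply Rle_antisym; apply le_of_ds_le; lra.
  - pose proof (le_of_ds_le x b Hx ltac:(lra) ltac:(lra)). lra.
Qed.

Lemma clamped_inv_antitone y1 y2 : y1 <= y2 -> clamped_inv ds b y2 <= clamped_inv ds b y1.
Proof.
  intros Hy. pose proof ds_b_lt_ds_0.
  destruct (clamped_inv_cases y1) as [[? E1]|[(? & ? & E1)|[? E1]]];
  destruct (clamped_inv_cases y2) as [[? E2]|[(? & ? & E2)|[? E2]]];
  try lra. apply le_of_ds_le; lra.
Qed.

Lemma clamped_inv_continuous y : limit1_in (clamped_inv ds b) (fun _ => True) (clamped_inv ds b y) y.
Proof.
  apply (antitone_onto_continuous _ 0 b).
  - intros y1 y2. apply clamped_inv_antitone.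
  - exact clamped_inv_range.
  - intros x Hx. exists (ds x). exact (clamped_inv_ds x Hx).
Qed.

Lemma clamped_inv_pos y : 0 < clamped_inv ds b y -> y < ds 0.
Proof.
  intros Hpos. pose proof ds_b_lt_ds_0.
  destruct (clamped_inv_cases y) as [[? E]|[(? & _)|[? _]]]; lra.
Qed.

Lemma clamped_inv_eq0 y : clamped_inv ds b y = 0 -> ds 0 <= y.
Proof.
  destruct (clamped_inv_cases y) as [[? _]|[(? & _ & E)|[? ->]]]; intros H0; [lra| |lra].
  rewrite H0 in E. lra.
Qed.

Lemma ds_clamped_inv_interior y : clamped_inv ds b y < b -> 0 < clamped_inv ds b y ->
  ds (clamped_inv ds b y) = y.
Proof.
  intros Hb H0. destruct (clamped_inv_cases y) as [[_ E]|[(_ & _ & E)|[_ E]]]; lra.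
Qed.

Lemma ds_clamped_inv_ge y : y < ds 0 -> y <= ds (clamped_inv ds b y).
Proof.
  intros Hy. destruct (clamped_inv_cases y) as [[? _]|[(_ & _ & ->)|[? ->]]]; lra.
Qed.

Hypothesis ds_b_nonneg : 0 <= ds b.

Variables (k : nat) (c : nat -> R).
Hypothesis k_ge2 : (2 <= k)%nat.
Hypothesis c_pos : forall i, (1 <= i <= k)%nat -> 0 < c i.
Hypothesis c_antitone : forall i j, (1 <= i)%nat -> (i <= j <= k)%nat -> c j <= c i.

(* [theta_h ds b c g h] unfolds to [alloc (g h)], so [beta ds b k c g h] is
   [sum_to k (alloc (g h))] by conversion. *)
Definition alloc (lam : R) (i : nat) : R := clamped_inv ds b (c i * lam).

Lemma alloc_antitone lam1 lam2 i : (1 <= i <= k)%nat -> lam1 <= lam2 ->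
  alloc lam2 i <= alloc lam1 i.
Proof.
  intros Hi Hlam. pose proof (c_pos i Hi). apply clamped_inv_antitone. nra.
Qed.

Lemma alloc_CAP lam : sum_to k (alloc lam) = b -> CAP ds b k c (alloc lam).
Proof.
  intros Hsum.
  assert (Hrange : forall i, 0 <= alloc lam i <= b) by (intros; apply clamped_inv_range).
  assert (Hpair : forall i j, (1 <= i)%nat -> (i < j <= k)%nat ->
    alloc lam i + alloc lam j <= b).
  { intros i j Hi Hij. rewrite <- Hsum. apply sum_to_two_terms_le; auto. intros; apply Hrange. }
  (* otherwise every c_i * lam is at most ds b and every allocation is b *)
  assert (lam_pos : 0 < lam).
  { destruct (Rlt_dec 0 lam) as [|Hlam]; [assumption|].
    assert (Hfull : forall i, (1 <= i <= k)%nat -> alloc lam i = b).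
    { intros i Hi. pose proof (c_pos i Hi). apply clamped_inv_high. nra. }
    pose proof (Hpair 1%nat 2%nat ltac:(lia) ltac:(lia)).
    rewrite !Hfull in * by lia. lra. }
  split; [|split; [exact Hsum|split; [|split]]].
  - intros i _. apply Hrange.
  - intros i Hi Hik. apply clamped_inv_antitone.
    pose proof (c_antitone i (S i) Hi ltac:(lia)). pose proof (c_pos (S i) ltac:(lia)). nra.
  - intros i j Hi Hij Hj Hle Hpos.
    pose proof (Hpair i j Hi ltac:(lia)). pose proof (c_pos i ltac:(lia)). pose proof (c_pos j ltac:(lia)).
    unfold alloc. rewrite !ds_clamped_inv_interior; fold (alloc lam i) (alloc lam j); try lra.
    field. split; lra.
  - intros i j Hi Hij Hj Hlt Hzero.
    pose proof (c_pos i ltac:(lia)). pose proof (c_pos j ltac:(lia)).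
    assert (Hi0 : ds 0 <= c i * lam) by (apply clamped_inv_eq0; exact Hzero).
    assert (Hj0 : c j * lam <= ds (alloc lam j)).
    { apply ds_clamped_inv_ge, (clamped_inv_pos (c j * lam)). fold (alloc lam j). lra. }
    pose proof ds_b_lt_ds_0. apply Rle_ge, Rdiv_le_Rdiv_iff; [lra|lra|nra].
Qed.

Lemma CAP_alloc t : CAP ds b k c t ->
  exists lam, forall i, (1 <= i <= k)%nat -> t i = alloc lam i.
Proof.
  intros (t_nonneg & t_sum & t_step & t_ratio & t_zero).
  assert (t_le_b : forall i, (1 <= i <= k)%nat -> t i <= b).
  { intros i Hi. rewrite <- t_sum. apply sum_to_term_le; auto. }
  assert (t_le_tk : forall i, (1 <= i <= k)%nat -> t i <= t k).
  { intros i Hi. apply (stepwise_le t k t_step); lia. }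
  assert (tk_pos : 0 < t k).
  { destruct (Rlt_dec 0 (t k)) as [|Htk]; [assumption|].
    rewrite sum_to_eq0 in t_sum; [lra|].
    intros i Hi. pose proof (t_nonneg i Hi). pose proof (t_le_tk i Hi). lra. }
  pose proof (c_pos k ltac:(lia)) as ck_pos. pose proof ds_b_lt_ds_0.
  set (lam := ds (t k) / c k).
  exists lam. intros i Hi. pose proof (c_pos i Hi) as ci_pos.
  destruct (Rlt_dec 0 (t i)) as [ti_pos|ti_nonpos].
  - assert (Hds : ds (t i) = c i * lam).
    { destruct (Nat.eq_dec i k) as [->|Hik]; [unfold lam; field; lra|].
      pose proof (t_ratio i k ltac:(lia) ltac:(lia) ltac:(lia)
                    ltac:(apply Rle_ge, t_le_tk; lia) ti_pos) as Hratio.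
      (* a vanishing ds (t i) would make the quotient 0 (Rocq's x / 0 = 0) *)
      destruct (Req_dec (ds (t i)) 0) as [Hz|Hnz].
      - rewrite Hz, Rdiv_0_r in Hratio.
        assert (0 < c k / c i) by (apply Rdiv_lt_0_compat; lra). lra.
      - unfold lam. replace (ds (t k)) with (ds (t i) * (ds (t k) / ds (t i)))
          by (field; exact Hnz).
        rewrite Hratio. field. lra. }
    unfold alloc. rewrite <- Hds. symmetry. apply clamped_inv_ds.
    pose proof (t_le_b i Hi). lra.
  - assert (ti0 : t i = 0) by (pose proof (t_nonneg i Hi); lra).
    assert (Hik : i <> k) by (intros ->; lra).
    unfold alloc. rewrite ti0. symmetry. apply clamped_inv_low.
    pose proof (t_zero i k ltac:(lia) ltac:(lia) ltac:(lia) ltac:(lra) ti0) as Hz.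
    assert (ds0_pos : 0 < ds 0) by lra.
    apply Rge_le, (Rdiv_le_Rdiv_iff (c k) (c i) (ds (t k)) (ds 0) ci_pos ds0_pos) in Hz.
    assert (Htk : ds (t k) = c k * lam) by (unfold lam; field; lra).
    rewrite Htk in Hz. nra.
Qed.

Lemma alloc_sum_unique lam1 lam2 :
  sum_to k (alloc lam1) = b -> sum_to k (alloc lam2) = b ->
  forall i, (1 <= i <= k)%nat -> alloc lam1 i = alloc lam2 i.
Proof.
  intros S1 S2.
  destruct (Rle_dec lam1 lam2) as [Hle|Hgt].
  - intros i Hi. symmetry. revert i Hi. apply sum_to_le_eq; [|congruence].
    intros i Hi. apply alloc_antitone; auto.
  - apply sum_to_le_eq; [|congruence].
    intros i Hi. apply alloc_antitone; auto. lra.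
Qed.

Lemma CAP_unique t1 t2 : CAP ds b k c t1 -> CAP ds b k c t2 ->
  forall i, (1 <= i <= k)%nat -> t1 i = t2 i.
Proof.
  intros C1 C2.
  destruct (CAP_alloc t1 C1) as (lam1 & E1). destruct (CAP_alloc t2 C2) as (lam2 & E2).
  assert (S1 : sum_to k (alloc lam1) = b).
  { destruct C1 as (_ & <- & _). symmetry. exact (sum_to_ext k t1 _ E1). }
  assert (S2 : sum_to k (alloc lam2) = b).
  { destruct C2 as (_ & <- & _). symmetry. exact (sum_to_ext k t2 _ E2). }
  intros i Hi. rewrite E1, E2 by exact Hi. exact (alloc_sum_unique lam1 lam2 S1 S2 i Hi).
Qed.

Lemma wfp_solution_exists I g : auxiliary ds b k c I g ->
  exists h, I h /\ beta ds b k c g h = b.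
Proof.
  intros (I_int & g_cont & _ & hlo & hhi & Ilo & Ihi & Hlohi & Ghi & Glo).
  set (D := fun u => hlo <= u <= hhi).
  assert (D_I : forall u, D u -> I u) by (intros u Hu; exact (I_int hlo u hhi Ilo Ihi Hu)).
  assert (beta_cont : cont_on (beta ds b k c g) D).
  { intros x Dx. apply limit1_in_sum_to. intros i Hi.
    apply (limit1_in_subdomain _ (Dgf I (fun _ => True) (fun h => c i * g h))).
    { intros u Du. split; [apply D_I, Du|trivial]. }
    apply (limit_comp (fun h => c i * g h) (clamped_inv ds b) _ _ (c i * g x));
      [|apply clamped_inv_continuous].
    apply (limit_mul (fun _ => c i) g); [exact (limit_free (fun _ => c i) I x x)|].
    apply g_cont, D_I, Dx. }
  pose proof (c_pos 1%nat ltac:(lia)) as c1_pos. pose proof (c_pos k ltac:(lia)) as ck_pos.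
  pose proof ds_b_lt_ds_0.
  assert (beta_lo : beta ds b k c g hlo = 0).
  { apply sum_to_eq0. intros i Hi. apply clamped_inv_low.
    pose proof (c_antitone i k ltac:(lia) ltac:(lia)).
    assert (ds 0 / c k * c k = ds 0) by (field; lra).
    assert (0 < ds 0 / c k) by (apply Rdiv_lt_0_compat; lra).
    nra. }
  assert (beta_hi : 2 * b <= beta ds b k c g hhi).
  { assert (Hfull : forall i, (1 <= i <= k)%nat -> theta_h ds b c g hhi i = b).
    { intros i Hi. apply clamped_inv_high. pose proof (c_pos i Hi).
      pose proof (c_antitone 1 i ltac:(lia) ltac:(lia)).
      assert (ds b / c 1 * c 1 = ds b) by (field; lra).
      destruct (Rle_dec 0 (g hhi)); nra. }
    pose proof (sum_to_two_terms_le k (theta_h ds b c g hhi) 1 2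
      ltac:(intros; apply clamped_inv_range) ltac:(lia) ltac:(lia)) as Htwo.
    rewrite !Hfull in Htwo by lia. unfold beta. lra. }
  destruct (IVT_within (beta ds b k c g) hlo hhi b ltac:(lra) beta_cont ltac:(nra))
    as (h & Hh & Hbeta).
  exists h. split; [apply D_I, Hh|exact Hbeta].
Qed.

Lemma CAP_exists : exists theta, CAP ds b k c theta.
Proof.
  destruct (wfp_solution_exists _ _ (auxiliary_opp ds b k c)) as (h & _ & Hbeta).
  exists (alloc (- h)). exact (alloc_CAP _ Hbeta).
Qed.

End WaterFilling.

Theorem theorem3 (s ds : R -> R) (B b : R) (k : nat) (c : nat -> R) :
  standing s ds B b k c ->
  ((exists theta : nat -> R, CAP ds b k c theta) /\
   (forall t1 t2 : nat -> R, CAP ds b k c t1 -> CAP ds b k c t2 ->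
      forall i, (1 <= i <= k)%nat -> t1 i = t2 i)) /\
  (forall (I : R -> Prop) (g : R -> R), auxiliary ds b k c I g ->
     forall h, I h -> beta ds b k c g h = b ->
       CAP ds b k c (theta_h ds b c g h)) /\
  (forall (I : R -> Prop) (g : R -> R), auxiliary ds b k c I g ->
     exists h, I h /\ beta ds b k c g h = b).
Proof.
  intros (_ & _ & s_incr & s_concave & s_deriv & ds_cont & b_range & k_ge2 & c_step & ck_pos).
  assert (ds_decr : strictly_decreasing_on ds (fun x => 0 <= x <= b)).
  { intros x y Hx Hy. apply (deriv_strictly_decreasing s ds B s_deriv s_concave); lra. }
  assert (ds_cont_b : cont_on ds (fun x => 0 <= x <= b)).
  { intros x Hx. apply (limit1_in_subdomain _ (fun x => 0 <= x <= B)); [intros; lra|].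
    apply ds_cont. lra. }
  pose proof (deriv_nonneg s ds B s_deriv s_incr b b_range) as ds_b_nonneg.
  assert (c_antitone : forall i j, (1 <= i)%nat -> (i <= j <= k)%nat -> c j <= c i).
  { intros i j Hi Hij. enough (- c i <= - c j) by lra.
    apply (stepwise_le (fun i => - c i) k); auto. intros l Hl Hlk. simpl.
    pose proof (c_step l Hl Hlk). lra. }
  assert (c_pos : forall i, (1 <= i <= k)%nat -> 0 < c i).
  { intros i Hi. pose proof (c_antitone i k ltac:(lia) ltac:(lia)). lra. }
  destruct b_range as [b_pos _].
  split; [split|split].
  - apply CAP_exists; assumption.
  - apply CAP_unique; assumption.
  - intros I g _ h _ Hbeta. apply alloc_CAP; assumption.
  - intros I g Haux. apply wfp_solution_exists; assumption.
Qed.
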